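(* In the setting of the context, if $\lambda\in\varrho(T)\setminus\tilde\Lambda$ and $\Omega(\lambda)=0$, then $\mathbb M(\lambda)=\mathbb M(\bar\lambda)^*$.
   Context: Let $(a,b)$ be a real interval, $J$ a constant invertible skew-hermitian $n\times n$ matrix, $q,w$ $n\times n$ matrices of distributions of order $0$ (complex Radon measures) on $(a,b)$, $q$ hermitian, $w$ non-negative; $L^2(w)$ the space of classes of $f$ with $\int f^*wf<\infty$. For $u$ locally BV, $u^\pm$ are right/left limits; balanced means $u=(u^++u^-)/2$. $\Delta_r(x)=r(\{x\})$; $B_\pm(x,\lambda)=J\pm\frac12(\Delta_q(x)-\lambda\Delta_w(x))$; $\Lambda_x$ = set of $\lambda$ with $B_+(x,\lambda)$ or $B_-(x,\lambda)$ singular. Assume $a=x_0<x_1<\dots<x_N<x_{N+1}=b$ ($N\ge0$) with $\Lambda_x\cap\mathbb R=\emptyset$ for $x\notin\{x_1,\dots,x_N\}$; $\tilde\Lambda=\bigcup_{x\notin\{x_1,\dots,x_N\}}\Lambda_x$. Solutions of $Ju'+(q-\lambda w)u=wf$ are balanced locally BV functions satisfying it distributionally. $T_{\max}=\{([u],[f]):u,f\in L^2(w),Ju'+qu=wf\}$, $D_\lambda=\{(u,\lambda u)\in T_{\max}\}$, $n_\pm=\dim D_{\pm i}$, assumed equal; $(v_j,g_j)$, $j=1,\dots,n_+$, linearly independent in $D_i\oplus D_{-i}$ with $(g_k^*Jg_\ell)^-(b)-(g_k^*Jg_\ell)^+(a)=0$; $T=\{(u,f)\in T_{\max}:(g_j^*Ju)^-(b)-(g_j^*Ju)^+(a)=0\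 \forall j\}$ (self-adjoint), $\varrho(T)$ its resolvent set; $g=(g_1,\dots,g_{n_+})$. For $\lambda\notin\tilde\Lambda$, $U_j(\cdot,\lambda)$ is the balanced fundamental matrix of $Ju'+(q-\lambda w)u=0$ on $(x_j,x_{j+1})$ with $U_j(\xi_j,\lambda)=I$ ($\xi_j$ fixed, $q(\{\xi_j\})=w(\{\xi_j\})=0$), extended balanced and zero outside $[x_j,x_{j+1}]$; $\mathscr U=(U_0,\dots,U_N)$. $\mathcal J=\operatorname{diag}(J,\dots,J)$; $\mathcal B(\lambda)=\operatorname{diag}(B_+(x_k,\lambda))_{k=1}^N$, $\mathcal U^-(\lambda)=\operatorname{diag}(U_{k-1}^-(x_k,\lambda))_{k=1}^N$, $\mathcal U^+(\lambda)=\operatorname{diag}(U_k^+(x_k,\lambda))_{k=1}^N$, $E_\top=(0_{nN\times n},I_{nN})$, $E_\bot=(I_{nN},0_{nN\times n})$, $\mathbb B(\lambda)=\mathcal B(\lambda)\mathcal U^+(\lambda)E_\top+\mathcal B(\bar\lambda)^*\mathcal U^-(\lambda)E_\bot$, $\tilde{\mathbb B}(\lambda)=\mathcal B(\lambda)\mathcal U^+(\lambda)E_\top-\mathcal B(\bar\lambda)^*\mathcal U^-(\lambda)E_\bot$. $P_\pm(\lambda)$ orthogonal projections onto $\{\eta:\int_{(x_N,b)}(U_N\eta)^*wU_N\eta<\infty\}$ resp. $\{\eta:\int_{(a,x_1)}(U_0\eta)^*wU_0\eta<\infty\}$; $\mathscr Q_-=(I-P_-,0,\dots,0)$, $\mathscr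 Q_+=(0,\dots,0,I-P_+)$; $A_-(\lambda)=-(g^*JU_0(\cdot,\lambda)P_-(\lambda))^+(a)$, $A_+(\lambda)=(g^*JU_N(\cdot,\lambda)P_+(\lambda))^-(b)$, $\mathscr A_-=(A_-,0,\dots,0)$, $\mathscr A_+=(0,\dots,0,A_+)$. $\mathcal L_0$ = solutions of $Ju'+qu=0$ with $wu=0$; $N_0=\{\eta:\mathscr U(\cdot,0)\eta\in\mathcal L_0\}$; $\mathbb P$ = orthogonal projection onto $N_0^\perp$. $\mathbb F(\lambda)=(\mathbb B;\mathscr Q_-;\mathscr Q_+;\mathscr A_++\mathscr A_-;I-\mathbb P)$, $\mathbb H(\lambda)=\frac12(\tilde{\mathbb B};\mathscr Q_-;-\mathscr Q_+;\mathscr A_--\mathscr A_+;0)$ (block columns), $\mathbb F^\dagger$ the Moore–Penrose pseudoinverse (a left inverse of $\mathbb F(\lambda)$ for $\lambda\in\varrho(T)\setminus\tilde\Lambda$), $\mathbb M(\lambda)=\mathbb P\mathbb F(\lambda)^\dagger\mathbb H(\lambda)\mathcal J^{-1}\mathbb P$, $\Omega(\lambda)=\mathbb H(\lambda)\mathcal J^{-1}\mathbb P\mathbb F(\bar\lambda)^*+\mathbb F(\lambda)\mathbb P\mathcal J^{-1}\mathbb H(\bar\lambda)^*$. *)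

From HB Require Import structures.
From mathcomp Require Import all_boot all_order all_algebra.
From Stdlib Require Import ClassicalEpsilon.
Set Implicit Arguments. Unset Strict Implicit. Unset Printing Implicit Defensive.
Import Order.TTheory GRing.Theory Num.Theory.
Local Open Scope ring_scope.

Section Defs.
Variable C : numClosedFieldType.

Definition mxadj (m k : nat) (A : 'M[C]_(m, k)) : 'M[C]_(k, m) :=
  (map_mx Num.conj A)^T.

(** The four Penrose conditions; pinv = Moore--Penrose pseudoinverse *)
Definition is_pinv (m k : nat) (A : 'M[C]_(m, k)) (X : 'M[C]_(k, m)) : Prop :=
  [/\ A *m X *m A = A, X *m A *m X = X,
      mxadj (A *m X) = A *m X & mxadj (X *m A) = X *m A].

Definition pinv (m k : nat) (A : 'M[C]_(m, k)) : 'M[C]_(k, m) :=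
  epsilon (inhabits 0) (is_pinv A).

Definition hermitian_mx (m : nat) (A : 'M[C]_m) : Prop := mxadj A = A.
Definition skew_hermitian_mx (m : nat) (A : 'M[C]_m) : Prop := mxadj A = - A.
Definition psd_mx (m : nat) (A : 'M[C]_m) : Prop :=
  hermitian_mx A /\ forall v : 'cV[C]_m, 0 <= (mxadj v *m A *m v) 0 0.
Definition orth_proj (m : nat) (P : 'M[C]_m) : Prop :=
  P *m P = P /\ hermitian_mx P.

(** Data of the setting (abstracted):
    n : size, N : number of interior points x_1..x_N, p : n_+.
    Dq k, Dw k : Delta_q(x_{k+1}), Delta_w(x_{k+1})  (k : 'I_N).
    Um k lam : U_k^-(x_{k+1},lam)     (= U_{k'-1}^-(x_{k'},lam), k' = k+1)
    Up k lam : U_{k+1}^+(x_{k+1},lam) (= U_{k'}^+(x_{k'},lam),   k' = k+1)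
    Pm, Pp : P_-, P_+ ;  Am, Ap : A_-, A_+ ;  PP : the projection bbP. *)
Variables (n N p : nat) (J : 'M[C]_n) (Dq Dw : 'I_N -> 'M[C]_n)
  (Um Up : 'I_N -> C -> 'M[C]_n) (Pm Pp : C -> 'M[C]_n)
  (Am Ap : C -> 'M[C]_(p, n)) (PP : 'M[C]_(\sum_(i < N.+1) n)%N).

Definition Bplus (k : 'I_N) (lam : C) : 'M[C]_n :=
  J + 2^-1 *: (Dq k - lam *: Dw k).

Definition calJ : 'M[C]_(\sum_(i < N.+1) n) := \mxdiag_(i < N.+1) J.
Definition calB (lam : C) : 'M[C]_(\sum_(i < N) n) := \mxdiag_(i < N) Bplus i lam.
Definition calUm (lam : C) : 'M[C]_(\sum_(i < N) n) := \mxdiag_(i < N) Um i lam.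
Definition calUp (lam : C) : 'M[C]_(\sum_(i < N) n) := \mxdiag_(i < N) Up i lam.

Definition Etop : 'M[C]_(\sum_(i < N) n, \sum_(j < N.+1) n) :=
  \mxblock_(i < N, j < N.+1) (if (j : nat) == i.+1 then 1%:M else 0 : 'M[C]_n).
Definition Ebot : 'M[C]_(\sum_(i < N) n, \sum_(j < N.+1) n) :=
  \mxblock_(i < N, j < N.+1) (if (j : nat) == i then 1%:M else 0 : 'M[C]_n).

Definition BB (lam : C) :=
  calB lam *m calUp lam *m Etop + mxadj (calB (Num.conj lam)) *m calUm lam *m Ebot.
Definition BBt (lam : C) :=
  calB lam *m calUp lam *m Etop - mxadj (calB (Num.conj lam)) *m calUm lam *m Ebot.

Definition scrQm (lam : C) : 'M[C]_(n, \sum_(j < N.+1) n) :=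
  \mxrow_(j < N.+1) (if (j : nat) == 0%N then 1%:M - Pm lam else 0).
Definition scrQp (lam : C) : 'M[C]_(n, \sum_(j < N.+1) n) :=
  \mxrow_(j < N.+1) (if (j : nat) == N then 1%:M - Pp lam else 0).
Definition scrAm (lam : C) : 'M[C]_(p, \sum_(j < N.+1) n) :=
  \mxrow_(j < N.+1) (if (j : nat) == 0%N then Am lam else 0).
Definition scrAp (lam : C) : 'M[C]_(p, \sum_(j < N.+1) n) :=
  \mxrow_(j < N.+1) (if (j : nat) == N then Ap lam else 0).

Definition FF (lam : C) :=
  col_mx (BB lam) (col_mx (scrQm lam) (col_mx (scrQp lam)
    (col_mx (scrAp lam + scrAm lam) (1%:M - PP)))).
Definition HH (lam : C) :=
  2^-1 *: col_mx (BBt lam) (col_mx (scrQm lam) (col_mx (- scrQp lam)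
    (col_mx (scrAm lam - scrAp lam) (0 : 'M[C]_(\sum_(j < N.+1) n))))).

Definition MM (lam : C) := PP *m pinv (FF lam) *m HH lam *m invmx calJ *m PP.

Definition Omega (lam : C) :=
  HH lam *m invmx calJ *m PP *m mxadj (FF (Num.conj lam))
  + FF lam *m PP *m invmx calJ *m mxadj (HH (Num.conj lam)).

End Defs.

(* Omega(lam) = 0 says F(lam) P J^-1 H(lam')^* = - H(lam) J^-1 P F(lam')^*,
   where lam' is the conjugate of lam.  Multiplying on the left by the left
   inverse F(lam)^+ of F(lam) and on the right by the adjoint of the left
   inverse F(lam')^+ of F(lam') turns this into
   P J^-1 H(lam')^* F(lam')^+* = - F(lam)^+ H(lam) J^-1 P.  As J^-1 is
   skew-hermitian and P is an orthogonal projection, the adjoint of M(lam')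
   is the left-hand side compressed by P, hence equals M(lam). *)
From HB Require Import structures.
From mathcomp Require Import all_boot all_order all_algebra.
Set Implicit Arguments. Unset Strict Implicit. Unset Printing Implicit Defensive.
Import Order.TTheory GRing.Theory Num.Theory.
Local Open Scope ring_scope.

Lemma map_mxdiag (U V : nmodType) (f : {additive U -> V}) (k : nat)
    (k_ : 'I_k -> nat) (B : forall i, 'M[U]_(k_ i)) :
  map_mx f (\mxdiag_i B i) = \mxdiag_i map_mx f (B i).
Proof.
rewrite -(submxblockK (map_mx f (\mxdiag_i B i))) /mxdiag.
apply/eq_mxblockP => i j.
rewrite /submxblock -map_mxsub -/(submxblock _ i j) mxblockK.
case: eqP => [eq_ji|_]; last by rewrite map_mx0.
by subst j; rewrite !conform_mx_id.
Qed.

Lemma invmxN (R : comUnitRingType) (m : nat) (A : 'M[R]_m) :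
  invmx (- A) = - invmx A.
Proof.
have unitN1 : (-1 : R) \is a GRing.unit by rewrite unitrN1.
have unitN : (- A \in unitmx) = (A \in unitmx) by rewrite -scaleN1r unitmxZ.
have [uA | nuA] := boolP (A \in unitmx); last by rewrite /invmx unitN (negbTE nuA).
by rewrite -scaleN1r invmxZ ?unitmxZ // invrN1 scaleN1r.
Qed.

Section ConjugateTranspose.
Variable C : numClosedFieldType.

Lemma mxadjM (m k l : nat) (A : 'M[C]_(m, k)) (B : 'M[C]_(k, l)) :
  mxadj (A *m B) = mxadj B *m mxadj A.
Proof. by rewrite /mxadj map_mxM trmx_mul. Qed.

Lemma mxadj1 (m : nat) : mxadj (1%:M : 'M[C]_m) = 1%:M.
Proof. by rewrite /mxadj map_mx1 trmx1. Qed.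

Lemma mxadj_invmx (m : nat) (A : 'M[C]_m) : mxadj (invmx A) = invmx (mxadj A).
Proof. by rewrite /mxadj map_invmx trmx_inv. Qed.

Lemma mxadj_mxdiag (k : nat) (k_ : 'I_k -> nat) (B : forall i, 'M[C]_(k_ i)) :
  mxadj (\mxdiag_i B i) = \mxdiag_i mxadj (B i).
Proof. by rewrite /mxadj map_mxdiag tr_mxdiag. Qed.

(* No invertibility hypothesis is needed: invmx A = A for singular A. *)
Lemma skew_hermitian_invmx (m : nat) (A : 'M[C]_m) :
  skew_hermitian_mx A -> skew_hermitian_mx (invmx A).
Proof. by rewrite /skew_hermitian_mx mxadj_invmx => ->; apply: invmxN. Qed.

Lemma skew_hermitian_mxdiag (k : nat) (k_ : 'I_k -> nat)
    (B : forall i, 'M[C]_(k_ i)) :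
  (forall i, skew_hermitian_mx (B i)) -> skew_hermitian_mx (\mxdiag_i B i).
Proof.
by move=> skB; rewrite /skew_hermitian_mx mxadj_mxdiag -mxdiagN; apply: eq_mxdiag.
Qed.

Lemma left_inverse_compression_adj (m k : nat) (F F' H H' : 'M[C]_(k, m))
    (G G' : 'M[C]_(m, k)) (K P : 'M[C]_m) :
  skew_hermitian_mx K -> orth_proj P ->
  G *m F = 1%:M -> G' *m F' = 1%:M ->
  H *m K *m P *m mxadj F' + F *m P *m K *m mxadj H' = 0 ->
  P *m G *m H *m K *m P = mxadj (P *m G' *m H' *m K *m P).
Proof.
move=> skK [PP hP] GF G'F' Om.
have eqF : F *m (P *m K *m mxadj H') = - (H *m K *m P *m mxadj F').
  by apply/eqP; rewrite -addr_eq0 addrC !mulmxA Om.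
have eqG : P *m K *m mxadj H' = - (G *m H *m K *m P *m mxadj F').
  by rewrite -[LHS]mul1mx -GF -mulmxA eqF mulmxN !mulmxA.
have eqGG' : P *m K *m mxadj H' *m mxadj G' = - (G *m H *m K *m P).
  by rewrite eqG mulNmx -!mulmxA -mxadjM G'F' mxadj1 mulmx1.
have PGHKP : P *m (G *m H *m K *m P) = G *m H *m K *m P.
  by apply: oppr_inj; rewrite -mulmxN -eqGG' !mulmxA PP.
rewrite !mxadjM hP skK mulNmx mulmxN !mulmxA eqGG' mulNmx opprK.
by rewrite -[RHS]mulmxA PP -[RHS]PGHKP !mulmxA.
Qed.

End ConjugateTranspose.

Theorem lemma4p3 (C : numClosedFieldType) (n N p : nat) (J : 'M[C]_n)
  (Dq Dw : 'I_N -> 'M[C]_n) (Um Up : 'I_N -> C -> 'M[C]_n)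
  (Pm Pp : C -> 'M[C]_n) (Am Ap : C -> 'M[C]_(p, n))
  (PP : 'M[C]_(\sum_(i < N.+1) n)%N) (Sres : C -> Prop) (lam : C) :
  J \in unitmx -> skew_hermitian_mx J ->
  (forall k, hermitian_mx (Dq k)) -> (forall k, psd_mx (Dw k)) ->
  (forall z, orth_proj (Pm z)) -> (forall z, orth_proj (Pp z)) ->
  orth_proj PP ->
  (forall z, Sres z -> Sres (Num.conj z)) ->
  (forall z, Sres z ->
     pinv (FF J Dq Dw Um Up Pm Pp Am Ap PP z) *m FF J Dq Dw Um Up Pm Pp Am Ap PP z
     = 1%:M) ->
  Sres lam ->
  Omega J Dq Dw Um Up Pm Pp Am Ap PP lam = 0 ->
  MM J Dq Dw Um Up Pm Pp Am Ap PP lam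
  = mxadj (MM J Dq Dw Um Up Pm Pp Am Ap PP (Num.conj lam)).
Proof.
move=> _ skJ _ _ _ _ PPproj Sres_conj pinvK Sres_lam Om.
have skJinv : skew_hermitian_mx (invmx (calJ N J)).
  by apply/skew_hermitian_invmx/skew_hermitian_mxdiag.
exact: (left_inverse_compression_adj skJinv PPproj (pinvK _ Sres_lam)
  (pinvK _ (Sres_conj _ Sres_lam)) Om).
Qed.
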